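(* For every non-constant Boolean function $f:\{0,1\}^n\to\{0,1\}$ and every $0<\epsilon<1$, $M_\epsilon(f)\ge\frac12\deg_\pm(f)$.
   Context: $\mathsf N_\epsilon(f)$ is the minimum degree of a real polynomial $p$ with $|p(x)|\le\epsilon$ whenever $f(x)=0$ and $|p(x)|\ge1$ whenever $f(x)=1$; $\overline f=1-f$; $M_\epsilon(f)=\max\{\mathsf N_\epsilon(f),\mathsf N_\epsilon(\overline f)\}$. The sign degree $\deg_\pm(f)$ is the minimum degree of a real polynomial $p$ such that for all $x\in\{0,1\}^n$, $p(x)<0$ iff $f(x)=1$. *)

From HB Require Import structures.
From mathcomp Require Import all_boot all_order all_algebra.
From mathcomp Require Import mpoly.
From mathcomp Require Import boolp reals.

Set Implicit Arguments.
Unset Strict Implicit.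
Unset Printing Implicit Defensive.

Import Order.TTheory GRing.Theory Num.Theory.
Local Open Scope ring_scope.

(* A Boolean function on {0,1}^n; points of the cube are n-tuples of bits
   (false = 0, true = 1). *)
Definition boolfun (n : nat) := n.-tuple bool -> bool.

Definition cube_pt (R : nzRingType) (n : nat) (x : n.-tuple bool) : 'I_n -> R :=
  fun i => (tnth x i)%:R.

(* total degree of a multivariate polynomial (degree of 0 is 0) *)
Definition mdegree (R : nzRingType) (n : nat) (p : {mpoly R[n]}) : nat :=
  (msize p).-1.

Definition fcompl (n : nat) (f : boolfun n) : boolfun n := fun x => ~~ f x.

Definition nonconstant (n : nat) (f : boolfun n) : Prop :=
  exists x y, f x != f y.

Definition N_witness (R : realType) (n : nat) (eps : R) (f : boolfun n)
  (p : {mpoly R[n]}) : Prop :=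
  forall x : n.-tuple bool,
    (f x = false -> `|p.@[cube_pt R x]| <= eps) /\
    (f x = true -> 1 <= `|p.@[cube_pt R x]|).

Definition sign_witness (R : realType) (n : nat) (f : boolfun n)
  (p : {mpoly R[n]}) : Prop :=
  forall x : n.-tuple bool, (p.@[cube_pt R x] < 0) <-> f x = true.

(* least natural number satisfying P (0 if none, which never happens here) *)
Definition least_nat (P : nat -> Prop) : nat :=
  match pselect (exists d, P d) with
  | left h => @ex_minn (fun d => `[< P d >]) (let: ex_intro d hd := h in
                         ex_intro _ d (asboolT hd))
  | right _ => 0%N
  end.

Definition Neps (R : realType) (n : nat) (eps : R) (f : boolfun n) : nat :=
  least_nat (fun d => exists p : {mpoly R[n]},
                 (mdegree p <= d)%N /\ N_witness eps f p).

Definition Meps (R : realType) (n : nat) (eps : R) (f : boolfun n) : nat :=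
  maxn (Neps eps f) (Neps eps (fcompl f)).

Definition sign_deg (R : realType) (n : nat) (f : boolfun n) : nat :=
  least_nat (fun d => exists p : {mpoly R[n]},
                 (mdegree p <= d)%N /\ sign_witness f p).

From HB Require Import structures.
From mathcomp Require Import all_boot all_order all_algebra.
From mathcomp Require Import mpoly.
From mathcomp Require Import boolp reals.
From mathcomp Require Import zify lra.

Set Implicit Arguments.
Unset Strict Implicit.
Unset Printing Implicit Defensive.

Import Order.TTheory GRing.Theory Num.Theory.
Local Open Scope ring_scope.

(* If [p] eps-approximates [f] with degree [d], then [eps - p^2] sign-represents
   [f]: where [f = 1] we have [p^2 >= 1 > eps], and where [f = 0] we have
   [p^2 <= eps^2 <= eps].  Its degree is at most [2d], hence
   [deg_pm f <= 2 N_eps(f) <= 2 M_eps(f)]. *)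

Lemma least_nat_le (P : nat -> Prop) d : P d -> (least_nat P <= d)%N.
Proof.
move=> Pd; rewrite /least_nat; case: pselect => [h|//].
by case: ex_minnP => m _; apply; apply/asboolP.
Qed.

Lemma least_natP (P : nat -> Prop) : (exists d, P d) -> P (least_nat P).
Proof.
move=> exP; rewrite /least_nat; case: pselect => [h|//].
by case: ex_minnP => m /asboolP.
Qed.

Section TotalDegree.
Variable n : nat.

Lemma mdegreeC (R : nzRingType) (c : R) : mdegree (c%:MP : {mpoly R[n]}) = 0%N.
Proof. by rewrite /mdegree msizeC; case: (c != 0). Qed.

Lemma mdegreeN (R : nzRingType) (p : {mpoly R[n]}) : mdegree (- p) = mdegree p.
Proof. by rewrite /mdegree msizeN. Qed.

Lemma mdegreeD_le (R : nzRingType) (p q : {mpoly R[n]}) :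
  (mdegree (p + q) <= maxn (mdegree p) (mdegree q))%N.
Proof. rewrite /mdegree; have := msizeD_le p q; lia. Qed.

Lemma mdegreeM_le (R : idomainType) (p q : {mpoly R[n]}) :
  (mdegree (p * q) <= mdegree p + mdegree q)%N.
Proof.
have [->|p0] := eqVneq p 0; first by rewrite mul0r /mdegree msize0.
have [->|q0] := eqVneq q 0; first by rewrite mulr0 /mdegree msize0.
rewrite /mdegree msizeM //.
move: p0 q0; rewrite -!msize_poly_eq0; lia.
Qed.

Lemma mdegree_C_sub_sqr (R : idomainType) (c : R) (p : {mpoly R[n]}) :
  (mdegree (c%:MP - p * p) <= 2 * mdegree p)%N.
Proof.
apply: (leq_trans (mdegreeD_le _ _)).
rewrite mdegreeC mdegreeN max0n mul2n -addnn; exact: mdegreeM_le.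
Qed.

End TotalDegree.

Section CubeInterpolation.
Variables (n : nat) (R : comNzRingType).

Definition cube_delta (x : n.-tuple bool) : {mpoly R[n]} :=
  \prod_(i < n) (if tnth x i then 'X_i else 1 - 'X_i).

Lemma cube_factor_eval (x y : n.-tuple bool) (i : 'I_n) :
  (if tnth x i then 'X_i else 1 - 'X_i : {mpoly R[n]}).@[cube_pt R y]
  = (tnth x i == tnth y i)%:R.
Proof.
rewrite (fun_if (meval _)) mevalB meval1 mevalXU /cube_pt.
by case: (tnth x i); case: (tnth y i); rewrite /= ?subr0 ?subrr.
Qed.

Lemma cube_delta_eval (x y : n.-tuple bool) :
  (cube_delta x).@[cube_pt R y] = (x == y)%:R.
Proof.
rewrite rmorph_prod /=; have [<-|neq_xy] := eqVneq x y.
  by apply: big1 => i _; rewrite cube_factor_eval eqxx.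
have [i neq_i] : exists i, tnth x i != tnth y i.
  apply/existsP; apply: contraR neq_xy => /existsPn eq_xy.
  by apply/eqP/eq_from_tnth => i; apply/eqP/negPn/eq_xy.
by rewrite (bigD1 i) //= cube_factor_eval (negbTE neq_i) mul0r.
Qed.

Lemma cube_interpolation (g : n.-tuple bool -> R) :
  exists p : {mpoly R[n]}, forall x, p.@[cube_pt R x] = g x.
Proof.
exists (\sum_x g x *: cube_delta x) => y.
rewrite raddf_sum (bigD1 y) //= big1 => [|x neq_xy].
  by rewrite addr0 mevalZ cube_delta_eval eqxx mulr1.
by rewrite mevalZ cube_delta_eval (negbTE neq_xy) mulr0.
Qed.

End CubeInterpolation.

Section ApproximationToSign.
Variables (R : realType) (n : nat) (eps : R) (f : boolfun n).

Lemma Neps_witness : 0 <= eps ->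
  exists p : {mpoly R[n]}, (mdegree p <= Neps eps f)%N /\ N_witness eps f p.
Proof.
move=> eps_ge0; apply: (@least_natP (fun d =>
  exists p : {mpoly R[n]}, (mdegree p <= d)%N /\ N_witness eps f p)).
have [p p_f] := cube_interpolation (fun x => (f x)%:R : R).
exists (mdegree p), p; split => // x; rewrite p_f.
by split => ->; rewrite ?normr0 ?normr1.
Qed.

Lemma sign_witness_C_sub_sqr (p : {mpoly R[n]}) : 0 < eps -> eps < 1 ->
  N_witness eps f p -> sign_witness f (eps%:MP - p * p).
Proof.
move=> eps_gt0 eps_lt1 p_f x; rewrite mevalB mevalM mevalC.
have [p_f0 p_f1] := p_f x; set a := p.@[_] in p_f0 p_f1 *.
have sqr_a : a * a = `|a| * `|a| by rewrite -!expr2 real_normK ?num_real.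
rewrite sqr_a; case: (f x) p_f0 p_f1 => [_ /(_ erefl) a_ge1|/(_ erefl) a_le _].
- by split=> // _; nra.
- by split=> // sign_neg; exfalso; have := normr_ge0 a; nra.
Qed.

End ApproximationToSign.

Theorem fact3p1 (R : realType) (n : nat) (f : boolfun n) (eps : R) :
  nonconstant f -> 0 < eps -> eps < 1 ->
  (sign_deg R f <= 2 * Meps eps f)%N.
Proof.
move=> _ eps_gt0 eps_lt1.
have [p [deg_p p_f]] := Neps_witness f (ltW eps_gt0).
have sign_deg_le : (sign_deg R f <= mdegree (eps%:MP - p * p))%N.
  apply: least_nat_le; exists (eps%:MP - p * p); split => //.
  exact: sign_witness_C_sub_sqr.
apply: leq_trans sign_deg_le (leq_trans (mdegree_C_sub_sqr _ _) _).
by rewrite leq_mul2l (leq_trans deg_p) ?leq_maxl ?orbT.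
Qed.
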